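(* Consider the two-species chemostat $$\dot x_1=(\mu_1(s)-D(t)-b_1)x_1,\quad \dot x_2=(\mu_2(s)-D(t)-b_2)x_2,\quad \dot s=D(t)(s_{in}(t)-s)-g_1(s)x_1-g_2(s)x_2,$$ with state $(x_1,x_2,s)\in(0,+\infty)^2\times A$ and output $y=s$, in either admissible setting described in the context. Suppose the system admits a coexistence equilibrium point, i.e. there are constants $D\ge0$, $s_{in}>0$ (admissible as constant inputs; in setting (ii) $s_{in}$ is the fixed inlet concentration) and a point $(x_1^*,x_2^*,s^* )\in(0,+\infty)^2\times(0,s_{in})$ with $\mu_1(s^* )-b_1=D=\mu_2(s^* )-b_2$ and $D(s_{in}-s^* )=g_1(s^* )x_1^*+g_2(s^* )x_2^*$. Then for every $r>0$ the system is not strongly observable in time $r$.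
   Context: For $i=1,2$: $\mu_i,g_i:[0,+\infty)\to[0,+\infty)$ are continuously differentiable bounded functions with $\mu_i(0)=g_i(0)=0$ and $\mu_i(s)>0$, $g_i(s)>0$ for all $s>0$; $b_i\ge 0$ are constants. Admissible settings: either (i) $A=(0,+\infty)$ and the inputs are measurable essentially bounded functions $(D,s_{in})$ with values in $[0,+\infty)^2$; or (ii) $s_{in}(t)\equiv s_{in}>0$ is a fixed constant, $A=(0,s_{in})$, and the input is a measurable essentially bounded $D$ with values in $[0,+\infty)$. For every admissible input and initial state in $(0,+\infty)^2\times A$ there is a unique solution remaining in $(0,+\infty)^2\times A$ for all $t\ge0$. The system is strongly observable in time $r>0$ if for every admissible input on $[0,r]$ and every two distinct initial states in $(0,+\infty)^2\times A$, the $s$-components $s(t),\bar s(t)$ of the two corresponding solutions satisfy $\max_{t\in[0,r]}|s(t)-\bar s(t)|>0$. *)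

From HB Require Import structures.
From mathcomp Require Import all_boot all_order all_algebra.
From mathcomp Require Import all_classical all_reals all_analysis.
Set Implicit Arguments. Unset Strict Implicit. Unset Printing Implicit Defensive.
Import Order.TTheory GRing.Theory Num.Theory.
Import numFieldNormedType.Exports.
Local Open Scope classical_set_scope.
Local Open Scope ring_scope.

Section Chemostat.
Variable R : realType.

Definition Rplus : set R := `[0, +oo[%classic.

Definition C1_halfline (f : R -> R) : Prop :=
  exists f' : R -> R,
    {within Rplus, continuous f'} /\
    forall x, 0 <= x ->
      (fun h : R => h^-1 * (f (x + h) - f x))
        @ within (fun h : R => 0 <= x + h) (0 : R)^' --> f' x.

Definition kinetic_fun (f : R -> R) : Prop :=
  C1_halfline f /\
  (exists M : R, forall s, 0 <= s -> `|f s| <= M) /\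
  (forall s, 0 <= s -> 0 <= f s) /\
  f 0 = 0 /\
  (forall s, 0 < s -> 0 < f s).

(* The setting: [None] = setting (i), A = (0,+oo) and inputs (D, s_in);
   [Some c] = setting (ii), s_in == c > 0 fixed, A = (0, c). *)
Definition setting_ok (st : option R) : Prop :=
  match st with None => True | Some c => 0 < c end.

Definition in_A (st : option R) (x : R) : Prop :=
  match st with None => 0 < x | Some c => 0 < x < c end.

Definition ess_bounded (f : R -> R) : Prop :=
  exists M : R, {ae (@lebesgue_measure R), forall t, Rplus t -> `|f t| <= M}.

Definition admissible_input (st : option R) (D sin : R -> R) : Prop :=
  measurable_fun Rplus D /\ ess_bounded D /\ (forall t, 0 <= t -> 0 <= D t) /\
  match st with
  | None => measurable_fun Rplus sin /\ ess_bounded sin /\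
            (forall t, 0 <= t -> 0 <= sin t)
  | Some c => forall t, 0 <= t -> sin t = c
  end.

(* Caratheodory (integral) solution identity for one component on [0,+oo). *)
Definition integral_eq (x rhs : R -> R) : Prop :=
  forall t, 0 <= t ->
    (@lebesgue_measure R).-integrable `[0, t] (EFin \o rhs) /\
    x t = x 0 + Rintegral (@lebesgue_measure R) `[0, t] rhs.

Definition chemostat_solution (mu1 mu2 g1 g2 : R -> R) (b1 b2 : R)
    (st : option R) (D sin : R -> R) (x1 x2 s : R -> R) : Prop :=
  (forall t, 0 <= t -> 0 < x1 t /\ 0 < x2 t /\ in_A st (s t)) /\
  integral_eq x1 (fun t => (mu1 (s t) - D t - b1) * x1 t) /\
  integral_eq x2 (fun t => (mu2 (s t) - D t - b2) * x2 t) /\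
  integral_eq s (fun t => D t * (sin t - s t) - g1 (s t) * x1 t - g2 (s t) * x2 t).

Definition strongly_observable (mu1 mu2 g1 g2 : R -> R) (b1 b2 : R)
    (st : option R) (r : R) : Prop :=
  forall D sin : R -> R, admissible_input st D sin ->
  forall x1 x2 s y1 y2 z : R -> R,
    chemostat_solution mu1 mu2 g1 g2 b1 b2 st D sin x1 x2 s ->
    chemostat_solution mu1 mu2 g1 g2 b1 b2 st D sin y1 y2 z ->
    (x1 0, x2 0, s 0) <> (y1 0, y2 0, z 0) ->
    exists t, 0 <= t <= r /\ s t <> z t.

Definition has_coexistence_equilibrium (mu1 mu2 g1 g2 : R -> R) (b1 b2 : R)
    (st : option R) : Prop :=
  exists (D sin x1 x2 s : R),
    0 <= D /\ 0 < sin /\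
    (match st with None => True | Some c => sin = c end) /\
    0 < x1 /\ 0 < x2 /\ 0 < s < sin /\
    mu1 s - b1 = D /\ D = mu2 s - b2 /\
    D * (sin - s) = g1 s * x1 + g2 s * x2.

End Chemostat.

(* Any coexistence equilibrium (x1, x2, s0) lies on a whole segment of
   equilibria with the same substrate value: moving along the direction
   (g2 s0, - g1 s0, 0) keeps the substrate balance, and the growth balances
   depend only on s0.  Two distinct points of that segment, held constant
   under the constant input (D, s_in), are solutions with identical outputs. *)
From HB Require Import structures.
From mathcomp Require Import all_boot all_order all_algebra.
From mathcomp Require Import all_classical all_reals all_analysis.
From mathcomp Require Import ring lra.
Set Implicit Arguments. Unset Strict Implicit. Unset Printing Implicit Defensive.
Import Order.TTheory GRing.Theory Num.Theory.
Local Open Scope ring_scope.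

Lemma integral_eq_cst (R : realType) (c : R) (f : R -> R) :
  (forall t, f t = 0) -> integral_eq (fun _ => c) f.
Proof.
move=> f0; have -> : f = cst 0 by apply: funext.
move=> t _; split; last by rewrite Rintegral_cst// mul0r addr0.
by apply: integrable0; exact: measurable_itv.
Qed.

Lemma admissible_input_cst (R : realType) (st : option R) (D sin : R) :
  0 <= D -> 0 <= sin -> (match st with None => True | Some c => sin = c end) ->
  admissible_input st (fun _ => D) (fun _ => sin).
Proof.
move=> D0 sin0 hst; split; first exact: measurable_cst.
split; first by exists `|D|; apply: aeW.
split=> //; case: st hst => [c ->|_] //.
split; first exact: measurable_cst.
by split=> //; exists `|sin|; apply: aeW.
Qed.

Section Equilibria.
Variables (R : realType) (mu1 mu2 g1 g2 : R -> R) (b1 b2 : R) (st : option R).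

Definition equilibrium_eqs (D sin x1 x2 s : R) : Prop :=
  [/\ mu1 s - b1 = D, mu2 s - b2 = D
    & D * (sin - s) = g1 s * x1 + g2 s * x2].

Lemma equilibrium_solution (D sin x1 x2 s : R) :
  0 < x1 -> 0 < x2 -> in_A st s -> equilibrium_eqs D sin x1 x2 s ->
  chemostat_solution mu1 mu2 g1 g2 b1 b2 st (fun _ => D) (fun _ => sin)
    (fun _ => x1) (fun _ => x2) (fun _ => s).
Proof.
move=> x10 x20 sA [e1 e2 e3]; split=> //.
split; first by apply: integral_eq_cst => t; rewrite -e1; ring.
split; first by apply: integral_eq_cst => t; rewrite -e2; ring.
by apply: integral_eq_cst => t; rewrite e3; ring.
Qed.

Lemma equilibrium_eqs_shift (D sin x1 x2 s e : R) :
  equilibrium_eqs D sin x1 x2 s ->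
  equilibrium_eqs D sin (x1 + e * g2 s) (x2 - e * g1 s) s.
Proof. by move=> [e1 e2 e3]; split=> //; rewrite e3; ring. Qed.

End Equilibria.

Theorem proposition3p3 (R : realType) (mu1 mu2 g1 g2 : R -> R) (b1 b2 : R)
  (st : option R) :
  kinetic_fun mu1 -> kinetic_fun mu2 -> kinetic_fun g1 -> kinetic_fun g2 ->
  0 <= b1 -> 0 <= b2 -> setting_ok st ->
  has_coexistence_equilibrium mu1 mu2 g1 g2 b1 b2 st ->
  forall r : R, 0 < r -> ~ strongly_observable mu1 mu2 g1 g2 b1 b2 st r.
Proof.
move=> _ _ [_ [_ [_ [_ g1_pos]]]] [_ [_ [g2_ge0 _]]] _ _ _.
move=> [D [sin [x1 [x2 [s [D0 [sin0 [hst [x10 [x20 [/andP[s0 ssin] [e1 [e2 e3]]]]]]]]]]]]].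
move=> r _ obs.
have g1s := g1_pos s s0.
have sA : in_A st s by case: st hst {obs} => [c <-|] /=; [apply/andP|].
have eqs : equilibrium_eqs mu1 mu2 g1 g2 b1 b2 D sin x1 x2 s by [].
set e := x2 / (2 * g1 s).
have e_g1 : e * g1 s = x2 / 2 by rewrite /e; field; rewrite gt_eqF.
have e_g2 : 0 <= e * g2 s.
  by rewrite mulr_ge0 ?(g2_ge0 s (ltW s0)) // ltW // divr_gt0 // mulr_gt0.
have y10 : 0 < x1 + e * g2 s by lra.
have y20 : 0 < x2 - e * g1 s by lra.
have [|t [_ []]] // := obs _ _ (admissible_input_cst D0 (ltW sin0) hst) _ _ _ _ _ _
  (equilibrium_solution x10 x20 sA eqs)
  (equilibrium_solution y10 y20 sA (equilibrium_eqs_shift e eqs)).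
move=> /(congr1 (fun y => y.1.2)) /= /eqP.
by rewrite eq_sym -subr_eq0 addrAC subrr add0r oppr_eq0 e_g1 gt_eqF // divr_gt0.
Qed.
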